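(* Let $\mathcal{C}$ be a category and $A$ an object of $\mathcal{C}$ with $D(A)<\infty$. Then every object $X$ of $\mathcal{C}$ with $X\leqslant^d A$ has the $d$-equality property.
   Context: In a category $\mathcal{C}$, $X\leqslant^d Y$ means there are morphisms $f:X\to Y$, $g:Y\to X$ with $g\circ f=\mathrm{id}_X$; $X<^p Y$ means $X\leqslant^d Y$ and $X\not\cong Y$. A chain of length $k$ for $A$ is $X_k<^p\cdots<^p X_1\leqslant^d A$; the depth $D(A)$ is the supremum of the lengths of all chains for $A$. An object $X$ has the $d$-equality property if every object $Y$ with $Y\leqslant^d X$ and $X\leqslant^d Y$ is isomorphic to $X$. *)

From Stdlib Require Import Arith.

Record Category := {
  Obj :> Type;
  Hom : Obj -> Obj -> Type;
  comp : forall {X Y Z : Obj}, Hom Y Z -> Hom X Y -> Hom X Z;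
  idm : forall X : Obj, Hom X X;
  comp_assoc : forall (W X Y Z : Obj) (h : Hom Y Z) (g : Hom X Y) (f : Hom W X),
      comp h (comp g f) = comp (comp h g) f;
  comp_id_l : forall (X Y : Obj) (f : Hom X Y), comp (idm Y) f = f;
  comp_id_r : forall (X Y : Obj) (f : Hom X Y), comp f (idm X) = f
}.

Arguments Hom {c} X Y.
Arguments comp {c X Y Z} g f.
Arguments idm {c} X.

Definition dle {C : Category} (X Y : C) : Prop :=
  exists (f : Hom X Y) (g : Hom Y X), comp g f = idm X.

Definition iso {C : Category} (X Y : C) : Prop :=
  exists (f : Hom X Y) (g : Hom Y X), comp g f = idm X /\ comp f g = idm Y.

Definition dlt {C : Category} (X Y : C) : Prop := dle X Y /\ ~ iso X Y.

(* A chain of length k for A: X_k <^p ... <^p X_1 <=^d A (indices 1..k). *)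
Definition chain {C : Category} (A : C) (k : nat) (X : nat -> C) : Prop :=
  1 <= k /\ dle (X 1) A /\ (forall i, 1 <= i -> i < k -> dlt (X (S i)) (X i)).

(* D(A) < infinity: the lengths of chains for A are bounded. *)
Definition finite_depth {C : Category} (A : C) : Prop :=
  exists N : nat, forall (k : nat) (X : nat -> C), chain A k X -> k <= N.

Definition d_equality {C : Category} (X : C) : Prop :=
  forall Y : C, dle Y X -> dle X Y -> iso Y X.

(* If X is a retract of A, and X and Y are retracts of each other without being
   isomorphic, then Y <^p X <^p Y <^p X ... alternates forever, so A has chains
   of every length and cannot have finite depth. *)
From Stdlib Require Import Arith Classical Lia.

Lemma iso_sym {C : Category} (X Y : C) : iso X Y -> iso Y X.
Proof. intros [f [g [Hgf Hfg]]]. exists g, f. auto. Qed.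

Lemma chain_alternating {C : Category} (A X Y : C) :
  dle X A -> dle Y X -> dle X Y -> ~ iso Y X ->
  forall k, 1 <= k -> chain A k (fun i => if Nat.even i then Y else X).
Proof.
  intros HXA HYX HXY Hniso k Hk.
  split; [exact Hk|]. split; [exact HXA|].
  intros i _ _. rewrite Nat.even_succ, <- Nat.negb_even.
  destruct (Nat.even i); simpl.
  - split; [exact HXY|]. intro Hiso. apply Hniso, iso_sym, Hiso.
  - split; [exact HYX|exact Hniso].
Qed.

Lemma chains_unbounded_not_finite_depth {C : Category} (A : C) :
  (forall k, 1 <= k -> exists X : nat -> C, chain A k X) -> ~ finite_depth A.
Proof.
  intros Hchains [N HN].
  destruct (Hchains (S N)) as [X HX]; [lia|].
  specialize (HN _ _ HX). lia.
Qed.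

Theorem lemma2p15 (C : Category) (A : C) :
  finite_depth A -> forall X : C, dle X A -> d_equality X.
Proof.
  intros Hdepth X HXA Y HYX HXY.
  apply NNPP; intro Hniso.
  apply (chains_unbounded_not_finite_depth A); [|exact Hdepth].
  intros k Hk. eexists.
  exact (chain_alternating A X Y HXA HYX HXY Hniso k Hk).
Qed.
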